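(* Let $G=\{0,g_1,\dots,g_k\}$ be a finite abelian group (with $g_1,\dots,g_k$ its distinct nonzero elements) such that $g_1+\cdots+g_k=0$, and let $\beta$ be a bicharacter of $G$. Let $A$ be a $G$-graded $\beta$-commutative algebra with $A_0=K$, and suppose that the graded monomial $x_{1}^{(g_1)}x_{2}^{(g_2)}\cdots x_{k}^{(g_k)}$ is not a graded polynomial identity of $A$ (i.e. there exist $a_{j}\in A_{g_j}$ with $a_1\cdots a_k\neq 0$). Then $\dim A=|G|$ and $A$ is isomorphic, as a $G$-graded algebra, to a twisted group algebra $K^\alpha G$ for some 2-cocycle $\alpha$.
   Context: All algebras are associative with unit over an algebraically closed field $K$ of characteristic $0$; $G$ is a finite abelian group written additively. A bicharacter of $G$ is a map $\beta\colon G\times G\to K^*$ with $\beta(g,h)=\beta(h,g)^{-1}$, $\beta(g,h+k)=\beta(g,h)\beta(g,k)$, $\beta(g+k,h)=\beta(g,h)\beta(k,h)$. A $G$-graded algebra $C=\bigoplus_g C_g$ is $\beta$-commutative if $c_gc_h=\beta(g,h)c_hc_g$ for all $g,h\in G$, $c_g\in C_g$, $c_h\in C_h$. For a 2-cocycle $\alpha\colon G\times G\to K^*$, the twisted group algebra $K^\alpha G$ has basis $\{X_g\}_{g\in G}$ with $X_gX_h=\alpha(g,h)X_{g+h}$ and grading $(K^\alpha G)_g=KX_g$. Graded polynomial identities are taken in the free $G$-graded algebra on variables $x_i^{(g)}$ of homogeneous degree $g$. *)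

From HB Require Import structures.
From mathcomp Require Import all_boot all_order all_algebra.
Set Implicit Arguments. Unset Strict Implicit. Unset Printing Implicit Defensive.
Import GRing.Theory.
Local Open Scope ring_scope.

Definition bicharacter (G : finZmodType) (K : fieldType) (beta : G -> G -> K) :=
  [/\ forall g h, beta g h != 0,
      forall g h, beta g h = (beta h g)^-1,
      forall g h k, beta g (h + k) = beta g h * beta g k
    & forall g h k, beta (g + k) h = beta g h * beta k h].

Definition two_cocycle (G : finZmodType) (K : fieldType) (alpha : G -> G -> K) :=
  (forall g h, alpha g h != 0) /\
  (forall g h k, alpha g h * alpha (g + h) k = alpha h k * alpha g (h + k)).

Definition is_grading (G : finZmodType) (K : fieldType) (A : algType K)
    (Agr : G -> pred A) :=
  [/\
      (forall g, 0 \in Agr g) /\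
      (forall g x y, x \in Agr g -> y \in Agr g -> x + y \in Agr g) /\
      (forall g (c : K) x, x \in Agr g -> c *: x \in Agr g),
      forall a : A, exists c : G -> A, (forall g, c g \in Agr g) /\ a = \sum_(g : G) c g,
      forall c : G -> A, (forall g, c g \in Agr g) -> \sum_(g : G) c g = 0 ->
        forall g, c g = 0
    &
      forall g h x y, x \in Agr g -> y \in Agr h -> x * y \in Agr (g + h)].

Definition beta_commutative (G : finZmodType) (K : fieldType) (A : algType K)
    (Agr : G -> pred A) (beta : G -> G -> K) :=
  forall g h x y, x \in Agr g -> y \in Agr h -> x * y = beta g h *: (y * x).

Definition degree0_is_K (G : finZmodType) (K : fieldType) (A : algType K)
    (Agr : G -> pred A) :=
  forall a : A, a \in Agr 0 <-> exists c : K, a = c%:A.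

Definition has_dim (K : fieldType) (A : algType K) (n : nat) :=
  exists e : 'I_n -> A,
    (forall c : 'I_n -> K, \sum_(i < n) c i *: e i = 0 -> forall i, c i = 0) /\
    (forall a : A, exists c : 'I_n -> K, a = \sum_(i < n) c i *: e i).

(* The twisted group algebra K^alpha G, realized on {ffun G -> K}
   (u <-> sum_g u g X_g), with X_g X_h = alpha g h X_(g+h). *)
Definition tw_basis (G : finZmodType) (K : fieldType) (g : G) : {ffun G -> K} :=
  [ffun x => (x == g)%:R].

Definition tw_mul (G : finZmodType) (K : fieldType) (alpha : G -> G -> K)
    (u v : {ffun G -> K}) : {ffun G -> K} :=
  [ffun k => \sum_(g : G) alpha g (k - g) * u g * v (k - g)].

Definition graded_iso_from_twisted (G : finZmodType) (K : fieldType) (A : algType K)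
    (Agr : G -> pred A) (alpha : G -> G -> K) (f : {ffun G -> K} -> A) :=
  [/\ forall (c : K) (u v : {ffun G -> K}),
        f [ffun x => c * u x + v x] = c *: f u + f v,
      bijective f,
      forall u v, f (tw_mul alpha u v) = f u * f v
    & forall (g : G) (c : K), f [ffun x => c * tw_basis K g x] \in Agr g].

From HB Require Import structures.
From mathcomp Require Import all_boot all_order all_algebra.
From mathcomp Require Import ring.
Set Implicit Arguments. Unset Strict Implicit. Unset Printing Implicit Defensive.
Import GRing.Theory.
Local Open Scope ring_scope.

(* Since A_0 = K and the g_j sum to 0, the product a_1 ... a_k is a nonzero
   scalar. By beta-commutativity any factor a_j can be moved to the front at
   the cost of a nonzero scalar, so each a_j has a right inverse, homogeneous
   of degree -g_j. Once every component A_g contains an element x_g with a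
   homogeneous right inverse, A_g = K x_g (multiply by the inverse to land in
   A_0 = K), so the x_g form a homogeneous basis with x_g x_h = alpha(g,h) x_(g+h);
   associativity makes alpha a 2-cocycle, and the coordinate map is the graded
   isomorphism from K^alpha G. *)

Lemma has_dim_basis (K : fieldType) (A : algType K) (T : finType) (e : T -> A) :
    (forall k : T -> K, \sum_t k t *: e t = 0 -> forall t, k t = 0) ->
    (forall a : A, exists k : T -> K, a = \sum_t k t *: e t) ->
  has_dim A #|T|.
Proof.
move=> e_free e_span; have enumK := reindex _ (onW_bij _ (@enum_val_bij T)).
exists (fun i => e (enum_val i)); split.
- move=> k sum0 i; have := e_free (fun t => k (enum_rank t)) _ (enum_val i).
  rewrite enum_valK; apply; rewrite -[RHS]sum0 enumK.
  by apply: eq_bigr => j _; rewrite enum_valK.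
- move=> a; have [k ->] := e_span a; exists (fun i => k (enum_val i)).
  by rewrite enumK.
Qed.

Section GradedAlgebra.

Variables (K : fieldType) (G : finZmodType) (A : algType K) (Agr : G -> pred A).
Hypotheses (Agr_grading : is_grading Agr) (Agr0 : degree0_is_K Agr).

Lemma homogZ g (c : K) x : x \in Agr g -> c *: x \in Agr g.
Proof. by case: Agr_grading => -[_ [_ AZ]] _ _ _; apply: AZ. Qed.

Lemma homogM g h x y : x \in Agr g -> y \in Agr h -> x * y \in Agr (g + h).
Proof. by case: Agr_grading => _ _ _; apply. Qed.

Lemma homog1 : (1 : A) \in Agr 0.
Proof. by apply/Agr0; exists 1; rewrite scale1r. Qed.

Lemma homog_prod (a : G -> A) (t : seq G) :
  (forall g, a g \in Agr g) -> \prod_(h <- t) a h \in Agr (\sum_(h <- t) h).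
Proof.
move=> a_homog; elim: t => [|h t IH]; first by rewrite !big_nil homog1.
by rewrite !big_cons homogM.
Qed.

Section BetaCommutative.

Variable beta : G -> G -> K.
Hypotheses (beta_neq0 : forall g h, beta g h != 0)
  (Agr_comm : beta_commutative Agr beta).

Lemma factor_right_inverse (a : G -> A) (t : seq G) (c : K) g :
    (forall h, a h \in Agr h) -> \sum_(h <- t) h = 0 ->
    \prod_(h <- t) a h = c%:A -> c != 0 -> g \in t ->
  exists2 y, y \in Agr (- g) & a g * y = 1.
Proof.
move=> a_homog sum0 prodE c_neq0 g_in_t.
case/splitPr: g_in_t sum0 prodE => t1 t2; rewrite !big_cat !big_cons /= => sum0 prodE.
set L := \prod_(h <- t1) a h in prodE; set R := \prod_(h <- t2) a h in prodE.
have L_homog : L \in Agr (\sum_(h <- t1) h) by apply: homog_prod.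
have R_homog : R \in Agr (\sum_(h <- t2) h) by apply: homog_prod.
have gR_homog := homogM (a_homog g) R_homog.
rewrite (Agr_comm L_homog gR_homog) -mulrA in prodE.
set b := beta _ _ in prodE; have b_neq0 : b != 0 by apply: beta_neq0.
have d_neq0 : b^-1 * c != 0 by rewrite mulf_neq0 ?invr_eq0.
have RL_deg : - g = \sum_(h <- t2) h + \sum_(h <- t1) h.
  by apply: (addrI g); rewrite subrr -[0 in LHS]sum0 addrCA (addrC (\sum_(h <- t2) h)).
exists ((b^-1 * c)^-1 *: (R * L)); first by rewrite RL_deg homogZ ?homogM.
rewrite -scalerAr -[a g * _](scalerK b_neq0) prodE !scalerA.
by rewrite -mulrA mulVf ?scale1r.
Qed.

End BetaCommutative.

Section HomogeneousUnits.

Hypothesis oneA_neq0 : (1 : A) != 0.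
Variable x : G -> A.
Hypotheses (x_homog : forall g, x g \in Agr g)
  (x_rinv : forall g, exists2 y, y \in Agr (- g) & x g * y = 1).

Lemma homog_coord g y : y \in Agr g -> exists k, y = k *: x g.
Proof.
move=> y_homog; have [z z_homog xz] := x_rinv g.
have /Agr0[k zyE] : z * y \in Agr 0 by rewrite -(addNr g) homogM.
by exists k; rewrite -[y]mul1r -xz -mulrA zyE -scalerAr mulr1.
Qed.

Lemma homog_unit_neq0 g : x g != 0.
Proof.
have [z _ xz] := x_rinv g; apply: contra oneA_neq0 => /eqP x0.
by rewrite -xz x0 mul0r.
Qed.

Lemma homog_units_free (k : G -> K) : \sum_g k g *: x g = 0 -> forall g, k g = 0.
Proof.
case: Agr_grading => _ _ Adir _ sum0 g.
have /eqP := Adir (fun g => k g *: x g) (fun g => homogZ _ (x_homog g)) sum0 g.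
by rewrite scaler_eq0 (negbTE (homog_unit_neq0 g)) orbF => /eqP.
Qed.

Lemma homog_units_span y : exists k : G -> K, y = \sum_g k g *: x g.
Proof.
case: Agr_grading => _ Adec _ _; have [c [c_homog ->]] := Adec y.
have [k ck] := fin_all_exists (fun g => homog_coord (c_homog g)).
by exists k; apply: eq_bigr => g _; apply: ck.
Qed.

Lemma exists_structure_constants :
  exists alpha : G -> G -> K, forall g h, x g * x h = alpha g h *: x (g + h).
Proof.
have coord_mul g h : exists k, x g * x h = k *: x (g + h).
  by apply: homog_coord; apply: homogM.
exact: fin_all_exists (fun g => fin_all_exists (coord_mul g)).
Qed.

Variable alpha : G -> G -> K.
Hypothesis x_mul : forall g h, x g * x h = alpha g h *: x (g + h).

Lemma structure_constants_cocycle : two_cocycle alpha.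
Proof.
split=> [g h | g h k].
  apply/eqP => alpha0; have [z _ xz] := x_rinv h.
  move: (homog_unit_neq0 g); rewrite -[x g]mulr1 -xz mulrA x_mul alpha0 scale0r.
  by rewrite mul0r eqxx.
have := mulrA (x g) (x h) (x k).
rewrite x_mul -scalerAr x_mul -scalerAl !x_mul !scalerA addrA => /eqP.
rewrite -subr_eq0 -scalerBl scaler_eq0 (negbTE (homog_unit_neq0 _)) orbF subr_eq0.
by move=> /eqP ->.
Qed.

Definition coord_map (u : {ffun G -> K}) : A := \sum_g u g *: x g.

Lemma coord_map_inj : injective coord_map.
Proof.
move=> u v /eqP; rewrite -subr_eq0 /coord_map -sumrB.
under eq_bigr do rewrite -scalerBl.
by move/eqP/homog_units_free => uv0; apply/ffunP => g; apply/eqP; rewrite -subr_eq0 uv0.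
Qed.

Lemma coord_map_bij : bijective coord_map.
Proof.
have surj y : exists u, coord_map u == y.
  have [k ->] := homog_units_span y; exists [ffun g => k g].
  by apply/eqP/eq_bigr => g _; rewrite ffunE.
exists (fun y => xchoose (surj y)) => [u|y]; last exact/eqP/(xchooseP (surj y)).
by apply: coord_map_inj; apply/eqP/(xchooseP (surj (coord_map u))).
Qed.

Lemma coord_map_mul u v :
  coord_map (tw_mul alpha u v) = coord_map u * coord_map v.
Proof.
rewrite /coord_map /tw_mul mulr_suml.
under eq_bigr => k _ do rewrite ffunE scaler_suml.
rewrite exchange_big /=; apply: eq_bigr => g _.
rewrite mulr_sumr (reindex_inj (addrI g)) /=; apply: eq_bigr => h _.
rewrite [g + h]addrC addrK -scalerAl -scalerAr x_mul !scalerA addrC.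
by congr (_ *: _); ring.
Qed.

Lemma coord_map_graded_iso : graded_iso_from_twisted Agr alpha coord_map.
Proof.
split; [move=> c u v | exact: coord_map_bij | exact: coord_map_mul | move=> g c].
  rewrite /coord_map scaler_sumr -big_split; apply: eq_bigr => g _.
  by rewrite ffunE scalerDl scalerA.
rewrite /coord_map (bigD1 g) //= big1 ?addr0.
  by rewrite /tw_basis !ffunE eqxx mulr1 homogZ.
by move=> h hg; rewrite /tw_basis !ffunE (negbTE hg) mulr0 scale0r.
Qed.

End HomogeneousUnits.

End GradedAlgebra.

Theorem theorem4p2 (K : closedFieldType) (G : finZmodType) (A : algType K)
    (Agr : G -> pred A) (beta : G -> G -> K) (s : seq G) :
  [pchar K] =i pred0 ->
  (* s = [:: g_1; ...; g_k] lists the distinct nonzero elements of G *)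
  uniq s -> (forall g : G, (g \in s) = (g != 0)) ->
  \sum_(g <- s) g = 0 ->
  bicharacter beta ->
  is_grading Agr ->
  beta_commutative Agr beta ->
  degree0_is_K Agr ->
  (* x_1^(g_1) ... x_k^(g_k) is not a graded identity of A *)
  (exists a : G -> A, (forall g, a g \in Agr g) /\ \prod_(g <- s) a g != 0) ->
  has_dim A #|G| /\
  exists alpha : G -> G -> K, two_cocycle alpha /\
    exists f : {ffun G -> K} -> A, graded_iso_from_twisted Agr alpha f.
Proof.
move=> _ _ s_nonzero sum0 [beta_neq0 _ _ _] Agr_grading Agr_comm Agr0.
case=> a [a_homog prod_neq0]; have Agr1 := homog1 Agr0.
have [c prodE] : exists c : K, \prod_(g <- s) a g = c%:A.
  by apply/Agr0; rewrite -sum0 homog_prod.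
have c_neq0 : c != 0.
  by apply: contra prod_neq0 => /eqP c0; rewrite prodE c0 scale0r.
have oneA_neq0 : (1 : A) != 0.
  by apply: contra prod_neq0 => /eqP e; rewrite -[X in X == _]mulr1 e mulr0.
have [x [x_homog x_rinv]] : exists x : G -> A, (forall g, x g \in Agr g) /\
    forall g, exists2 y, y \in Agr (- g) & x g * y = 1.
  exists (fun g => if g == 0 then 1 else a g).
  split=> g; case: eqP => [->|/eqP g_neq0] //; first by exists 1; rewrite ?oppr0 ?mulr1.
  apply: (factor_right_inverse Agr_grading Agr0 beta_neq0 Agr_comm a_homog sum0 prodE).
    exact: c_neq0.
  by rewrite s_nonzero.
have [alpha x_mul] := exists_structure_constants Agr_grading Agr0 x_homog x_rinv.
split.
  apply: has_dim_basis (homog_units_span Agr_grading Agr0 x_rinv).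
  exact (homog_units_free Agr_grading oneA_neq0 x_homog x_rinv).
exists alpha; split; first exact (structure_constants_cocycle oneA_neq0 x_rinv x_mul).
have iso := coord_map_graded_iso Agr_grading Agr0 oneA_neq0 x_homog x_rinv x_mul.
by exists (coord_map x).
Qed.
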